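(* For all integers $k_1,k_2,d_1,d_2\geq 1$ there exist graphs $G_1$ and $G_2$ such that, for $i\in\{1,2\}$, $G_i$ has maximum degree $\Delta_i:=k_id_i$ and degeneracy $d_i$, and $$\operatorname{degen}(G_1\boxtimes G_2)=d_1+d_2+\min\{d_1\Delta_2,\ d_2\Delta_1\}.$$
   Context: The degeneracy $\operatorname{degen}(G)$ of a graph $G$ is the minimum integer $d$ such that every subgraph of $G$ has minimum degree at most $d$. The strong product $G_1 \boxtimes G_2$ has vertex set $V(G_1)\times V(G_2)$, with distinct vertices $(a,v),(b,u)$ adjacent iff ($a=b$ or $ab\in E(G_1)$) and ($u=v$ or $uv\in E(G_2)$). *)

From mathcomp Require Import all_boot.
Set Implicit Arguments. Unset Strict Implicit. Unset Printing Implicit Defensive.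

Definition simple_graph (T : finType) (e : rel T) : Prop :=
  (forall x y, e x y = e y x) /\ (forall x, e x x = false).

Definition deg (T : finType) (e : rel T) (v : T) : nat := #|[set u | e v u]|.

Definition maxdeg (T : finType) (e : rel T) : nat := \max_(v : T) deg e v.

Definition subgraphs_mindeg_le (T : finType) (e : rel T) (d : nat) : Prop :=
  forall (S : {set T}) (f : rel T),
    (forall x y, f x y = f y x) ->
    (forall x y, f x y -> [&& e x y, x \in S & y \in S]) ->
    S != set0 ->
    exists2 v, v \in S & #|[set u in S | f v u]| <= d.

Definition is_degeneracy (T : finType) (e : rel T) (d : nat) : Prop :=
  subgraphs_mindeg_le e d /\ (forall d', subgraphs_mindeg_le e d' -> d <= d').

Definition strong_prod (T1 T2 : finType) (e1 : rel T1) (e2 : rel T2)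
  : rel (T1 * T2)%type :=
  fun p q => [&& p != q, (p.1 == q.1) || e1 p.1 q.1 & (p.2 == q.2) || e2 p.2 q.2].

From mathcomp Require Import all_boot zify.
Set Implicit Arguments. Unset Strict Implicit. Unset Printing Implicit Defensive.

(* Upper bound, for any graphs: in a nonempty subgraph S of G1 ⊠ G2 pick x of
   degree at most d1 in the projection of S to G1, then y of degree at most d2
   in the fibre of S over x.  A neighbour of (x, y) in S either lies in that
   fibre (at most d2 of them) or has its first coordinate adjacent to x in the
   projection and its second coordinate in N[y] (at most d1 (Δ2 + 1) of them).
   Swapping the factors gives the other term of the minimum.
   Lower bound: take for G_i the graph G(d_i, k_i) below, which contains a
   clique K_i on d_i + 1 vertices.  In G1 ⊠ G2 the vertices having a coordinate
   in a clique induce a subgraph of minimum degree d1 + d2 + min(d1 Δ2, d2 Δ1),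
   counted by inclusion-exclusion from |N[x] ∩ K1|, |N[x]|, |N[y] ∩ K2| and
   |N[y]|. *)

Definition closed_nbhd (T : finType) (e : rel T) (x : T) : {set T} :=
  [set u | (u == x) || e x u].

Section Subgraphs.
Variables (T : finType) (e : rel T).

Lemma card_closed_nbhd_le x : #|closed_nbhd e x| <= (maxdeg e).+1.
Proof.
have -> : closed_nbhd e x = x |: [set u | e x u] by apply/setP => u; rewrite !inE.
apply: leq_trans (leq_card_setU _ _) _; rewrite cards1 add1n ltnS.
exact: (leq_bigmax (F := deg e)).
Qed.

Lemma card_closed_nbhd x : irreflexive e -> #|closed_nbhd e x| = (deg e x).+1.
Proof.
move=> e_irr.
have -> : closed_nbhd e x = x |: [set u | e x u] by apply/setP => u; rewrite !inE.
by rewrite cardsU1 inE e_irr.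
Qed.

Lemma subgraph_card_nbhd_le (S : {set T}) (f : rel T) v :
  (forall x y, f x y -> [&& e x y, x \in S & y \in S]) ->
  #|[set u in S | f v u]| <= #|[set u in S | e v u]|.
Proof.
move=> fsub; apply/subset_leq_card/subsetP => u; rewrite !inE.
by case/andP=> uS /fsub/andP[-> _]; rewrite uS.
Qed.

Hypothesis e_sym : symmetric e.

Lemma induced_mindeg_le d (X : {set T}) :
  subgraphs_mindeg_le e d -> X != set0 ->
  exists2 x, x \in X & #|[set u in X | e x u]| <= d.
Proof.
move=> H X0; pose f x y := [&& e x y, x \in X & y \in X].
have f_sym : symmetric f by move=> x y; rewrite /f e_sym [(x \in X) && _]andbC.
have [v vX hv] := H X f f_sym (fun x y fxy => fxy) X0.
exists v => //; apply: leq_trans hv; apply/subset_leq_card/subsetP => u.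
by rewrite !inE /f vX => /andP[-> ->].
Qed.

Lemma is_degeneracy_witness d (S : {set T}) :
  subgraphs_mindeg_le e d -> S != set0 ->
  {in S, forall v, d <= #|[set u in S | e v u]|} -> is_degeneracy e d.
Proof.
move=> H S0 S_dense; split=> // d' H'.
have [v vS] := induced_mindeg_le H' S0.
exact: leq_trans (S_dense v vS).
Qed.

End Subgraphs.

Lemma subgraphs_mindeg_le_can (T T' : finType) (e : rel T) (e' : rel T')
    (h : T -> T') (h' : T' -> T) d :
  cancel h h' -> cancel h' h -> (forall x y, e' (h x) (h y) = e x y) ->
  subgraphs_mindeg_le e' d -> subgraphs_mindeg_le e d.
Proof.
move=> hK h'K he H S f f_sym fsub S0; have h_inj := can_inj hK.
have [|||v' /imsetP[v vS ->] hv] := H (h @: S) (fun x y => f (h' x) (h' y)).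
- by move=> x y; apply: f_sym.
- move=> x y /fsub/and3P[exy xS yS].
  by rewrite -[x]h'K -[y]h'K he !mem_imset // exy xS yS.
- by rewrite -card_gt0 card_imset // card_gt0.
exists v => //; apply: leq_trans hv.
rewrite -(card_imset _ h_inj); apply/subset_leq_card/subsetP.
move=> _ /imsetP[u /setIdP[uS fvu] ->].
by rewrite inE mem_imset // !hK uS.
Qed.

Section StrongProduct.
Variables (T1 T2 : finType) (e1 : rel T1) (e2 : rel T2).

Lemma strong_prod_sym :
  symmetric e1 -> symmetric e2 -> symmetric (strong_prod e1 e2).
Proof.
move=> e1_sym e2_sym p q.
by rewrite /strong_prod eq_sym [q.1 == _]eq_sym [q.2 == _]eq_sym e1_sym e2_sym.
Qed.

Lemma strong_prodC p q :
  strong_prod e2 e1 (p.2, p.1) (q.2, q.1) = strong_prod e1 e2 p q.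
Proof.
case: p q => [a b] [c d]; rewrite /strong_prod /= !xpair_eqE.
by rewrite [(b == d) && _]andbC [X in _ && X]andbC.
Qed.

Lemma strong_prod_nbhd (S : {set T1 * T2}) p :
  [set u in S | strong_prod e1 e2 p u] =
  (setX (closed_nbhd e1 p.1) (closed_nbhd e2 p.2) :&: S) :\ p.
Proof.
apply/setP => -[a b]; rewrite !inE /strong_prod /=.
rewrite [(a, b) == p]eq_sym [a == _]eq_sym [b == _]eq_sym.
by case: (_ \in S); rewrite ?andbT ?andbF.
Qed.

Lemma card_setX_cross (A1 B1 : {set T1}) (A2 B2 : {set T2}) :
  #|setX B1 B2 :&: (setX A1 setT :|: setX setT A2)| + #|B1 :&: A1| * #|B2 :&: A2|
  = #|B1 :&: A1| * #|B2| + #|B1| * #|B2 :&: A2|.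
Proof.
have -> : setX B1 B2 :&: (setX A1 setT :|: setX setT A2)
          = setX (B1 :&: A1) B2 :|: setX B1 (B2 :&: A2).
  apply/setP => -[a b]; rewrite !inE.
  by case: (a \in A1); case: (a \in B1); case: (b \in A2); case: (b \in B2).
rewrite -(cardsX (B1 :&: A1) (B2 :&: A2)).
rewrite -(cardsX (B1 :&: A1) B2) -(cardsX B1 (B2 :&: A2)).
have -> : setX (B1 :&: A1) (B2 :&: A2) = setX (B1 :&: A1) B2 :&: setX B1 (B2 :&: A2).
  apply/setP => -[a b]; rewrite !inE.
  by case: (a \in A1); case: (a \in B1); case: (b \in A2); case: (b \in B2).
exact: cardsUI.
Qed.

Hypotheses (e1_sym : symmetric e1) (e2_sym : symmetric e2).

Lemma strong_prod_mindeg_le d1 d2 :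
  subgraphs_mindeg_le e1 d1 -> subgraphs_mindeg_le e2 d2 ->
  subgraphs_mindeg_le (strong_prod e1 e2) (d1 * (maxdeg e2).+1 + d2).
Proof.
move=> H1 H2 S f _ fsub /set0Pn[p0 p0S].
pose X := [set p.1 | p in S].
have X0 : X != set0 by apply/set0Pn; exists p0.1; apply: imset_f.
have [x xX hx] := induced_mindeg_le e1_sym H1 X0.
have [p pS px] := imsetP xX.
pose Y := [set y | (x, y) \in S].
have Y0 : Y != set0 by apply/set0Pn; exists p.2; rewrite inE px -surjective_pairing.
have [y yY hy] := induced_mindeg_le e2_sym H2 Y0.
have xyS : (x, y) \in S by rewrite inE in yY.
exists (x, y) => //.
have nbhd_sub : [set u in S | f (x, y) u] \subset
    setX [set x] [set u in Y | e2 y u] :|: setX [set u in X | e1 x u] (closed_nbhd e2 y).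
  apply/subsetP => -[a b]; rewrite !inE => /andP[abS /fsub/and3P[]].
  rewrite /strong_prod /= => /and3P[xy_ne xa yb] _ _.
  case: (eqVneq x a) abS xy_ne yb => [<-|neq_xa] abS xy_ne yb.
    rewrite xpair_eqE eqxx /= in xy_ne; rewrite (negPf xy_ne) /= in yb.
    by rewrite abS yb.
  rewrite (negPf neq_xa) /= in xa.
  by rewrite xa eq_sym yb !andbT; apply/imsetP; exists (a, b).
apply: leq_trans (subset_leq_card nbhd_sub) _.
apply: leq_trans (leq_card_setU _ _) _.
rewrite !cardsX cards1 mul1n addnC leq_add // leq_mul //.
exact: card_closed_nbhd_le.
Qed.

End StrongProduct.

Lemma strong_prod_mindeg_le_min (T1 T2 : finType) (e1 : rel T1) (e2 : rel T2)
    d1 d2 :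
  symmetric e1 -> symmetric e2 ->
  subgraphs_mindeg_le e1 d1 -> subgraphs_mindeg_le e2 d2 ->
  subgraphs_mindeg_le (strong_prod e1 e2)
    (d1 + d2 + minn (d1 * maxdeg e2) (d2 * maxdeg e1)).
Proof.
move=> e1_sym e2_sym H1 H2; rewrite /minn; case: ltnP => _.
  by rewrite addnAC -mulnS; apply: strong_prod_mindeg_le.
rewrite -addnA addnC -mulnS.
apply: (subgraphs_mindeg_le_can (h := fun p : T1 * T2 => (p.2, p.1))
                               (h' := fun p : T2 * T1 => (p.2, p.1))).
- by case.
- by case.
- exact: strong_prodC.
- exact: strong_prod_mindeg_le.
Qed.

Section Gadget.
Variables d k : nat.

Definition gadget_vertex := ('I_d.+1 * 'I_k.+1)%type.

(* Column [ord0] is a clique on d.+1 vertices and every other vertex (a, t)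
   is joined to the clique vertices (b, ord0) with b <> a; with k.+1 columns
   the maximum degree is k.+1 * d (the paper's k is k.+1 here). *)
Definition gadget : rel gadget_vertex :=
  fun p q => (p.1 != q.1) && ((p.2 == ord0) || (q.2 == ord0)).

Definition gadget_clique : {set gadget_vertex} := [set p | p.2 == ord0].

Lemma gadget_sym : symmetric gadget.
Proof. by move=> p q; rewrite /gadget eq_sym orbC. Qed.

Lemma gadget_irr : irreflexive gadget.
Proof. by move=> p; rewrite /gadget eqxx. Qed.

Lemma gadget_simple : simple_graph gadget.
Proof. exact: (conj gadget_sym gadget_irr). Qed.

Lemma gadget_nbhd x :
  [set u | gadget x u] =
  setX [set~ x.1] (if x \in gadget_clique then setT else [set ord0]).
Proof.
apply/setP => -[a t]; rewrite !inE /gadget /= [a == _]eq_sym.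
by case: (x.2 == ord0); rewrite /= ?inE ?andbT.
Qed.

Lemma deg_gadget x : deg gadget x = if x \in gadget_clique then k.+1 * d else d.
Proof.
rewrite /deg gadget_nbhd cardsX cardsC1 card_ord /=.
by case: ifP => _; rewrite ?cardsT ?card_ord ?cards1 ?muln1 // mulnC.
Qed.

Lemma maxdeg_gadget : maxdeg gadget = k.+1 * d.
Proof.
apply/eqP; rewrite eqn_leq; apply/andP; split.
  apply/bigmax_leqP => x _; rewrite deg_gadget.
  by case: ifP => _ //; rewrite leq_pmull.
by have := leq_bigmax (F := deg gadget) (ord0, ord0); rewrite deg_gadget inE.
Qed.

Lemma gadget_clique_nbhd x :
  [set u in gadget_clique | gadget x u] = setX [set~ x.1] [set ord0].
Proof.
apply/setP => -[a t]; rewrite !inE /gadget /= [a == _]eq_sym.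
by case: (t == ord0); rewrite ?orbT ?andbT ?andbF.
Qed.

Lemma card_gadget_clique_nbhd x : #|[set u in gadget_clique | gadget x u]| = d.
Proof. by rewrite gadget_clique_nbhd cardsX cardsC1 cards1 card_ord muln1. Qed.

Lemma card_closed_nbhd_clique x :
  #|closed_nbhd gadget x :&: gadget_clique| = (x \in gadget_clique) + d.
Proof.
have -> : closed_nbhd gadget x :&: gadget_clique =
          setX (if x \in gadget_clique then setT else [set~ x.1]) [set ord0].
  case: x => b s; apply/setP => -[a t]; rewrite !inE /gadget /= xpair_eqE.
  case: (eqVneq t ord0) => [->|]; rewrite ?andbF ?andbT //.
  by case: (eqVneq s ord0) => _; rewrite ?inE /= [b == _]eq_sym ?andbT; case: (a == b).
rewrite cardsX cards1 muln1; case: ifP => _.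
  by rewrite cardsT card_ord.
by rewrite cardsC1 card_ord.
Qed.

Lemma gadget_mindeg_le : subgraphs_mindeg_le gadget d.
Proof.
move=> S f _ fsub /set0Pn[v0 v0S].
have [/exists_inP[v vS vC]|] := boolP [exists v in S, v \notin gadget_clique].
  exists v => //; apply: leq_trans (subgraph_card_nbhd_le _ fsub) _.
  apply: (@leq_trans (deg gadget v)); last by rewrite deg_gadget (negPf vC).
  by apply/subset_leq_card/subsetP => u; rewrite !inE => /andP[].
move/exists_inPn => S_clique; exists v0 => //.
apply: leq_trans (subgraph_card_nbhd_le _ fsub) _.
apply: leq_trans (eq_leq (card_gadget_clique_nbhd v0)).
apply/subset_leq_card/subsetP => u.
by rewrite !inE => /andP[/S_clique]; rewrite negbK inE => -> ->.
Qed.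

Lemma is_degeneracy_gadget : is_degeneracy gadget d.
Proof.
apply: (is_degeneracy_witness gadget_sym gadget_mindeg_le (S := gadget_clique)).
  by apply/set0Pn; exists (ord0, ord0); rewrite inE.
by move=> v _; rewrite card_gadget_clique_nbhd.
Qed.

End Gadget.

Arguments gadget : clear implicits.
Arguments gadget_clique : clear implicits.

Section GadgetProduct.
Variables d1 k1 d2 k2 : nat.

Definition clique_cross : {set gadget_vertex d1 k1 * gadget_vertex d2 k2} :=
  setX (gadget_clique d1 k1) setT :|: setX setT (gadget_clique d2 k2).

Lemma clique_cross_dense :
  {in clique_cross, forall p,
     d1 + d2 + minn (d1 * (k2.+1 * d2)) (d2 * (k1.+1 * d1)) <=
     #|[set u in clique_cross | strong_prod (gadget d1 k1) (gadget d2 k2) p u]|}.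
Proof.
move=> [x y] xyS; rewrite strong_prod_nbhd /=.
set N := setX _ _ :&: _.
have card_N : #|N| = #|N :\ (x, y)|.+1.
  by rewrite (cardsD1 (x, y)) in_setI in_setX xyS !inE !eqxx.
have := card_setX_cross (gadget_clique d1 k1) (closed_nbhd (gadget d1 k1) x)
                        (gadget_clique d2 k2) (closed_nbhd (gadget d2 k2) y).
rewrite -/clique_cross -/N card_N !card_closed_nbhd_clique.
rewrite !(card_closed_nbhd _ (@gadget_irr _ _)) !deg_gadget.
have := leq_pmull d1 (ltn0Sn k1); have := leq_pmull d2 (ltn0Sn k2).
have := geq_minl (d1 * (k2.+1 * d2)) (d2 * (k1.+1 * d1)).
have := geq_minr (d1 * (k2.+1 * d2)) (d2 * (k1.+1 * d1)).
move: #|N :\ (x, y)| (k1.+1 * d1) (k2.+1 * d2) (minn _ _) => n D1 D2 m.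
move: xyS; rewrite in_setU !in_setX !in_setT andbT /=.
by case: (x \in gadget_clique d1 k1); case: (y \in gadget_clique d2 k2) => //= _; nia.
Qed.

End GadgetProduct.

Theorem mainTheorem8 (k1 k2 d1 d2 : nat) :
  0 < k1 -> 0 < k2 -> 0 < d1 -> 0 < d2 ->
  exists (T1 T2 : finType) (e1 : rel T1) (e2 : rel T2),
    simple_graph e1 /\ simple_graph e2 /\
    maxdeg e1 = k1 * d1 /\ maxdeg e2 = k2 * d2 /\
    is_degeneracy e1 d1 /\ is_degeneracy e2 d2 /\
    is_degeneracy (strong_prod e1 e2)
          (d1 + d2 + minn (d1 * (k2 * d2)) (d2 * (k1 * d1))).
Proof.
case: k1 => // k1 _; case: k2 => // k2 _ _ _.
exists (gadget_vertex d1 k1), (gadget_vertex d2 k2), (gadget d1 k1), (gadget d2 k2).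
do 2 (split; first exact: gadget_simple).
do 2 (split; first exact: maxdeg_gadget).
do 2 (split; first exact: is_degeneracy_gadget).
have prod_sym := strong_prod_sym (@gadget_sym d1 k1) (@gadget_sym d2 k2).
apply: (is_degeneracy_witness prod_sym (S := clique_cross d1 k1 d2 k2)).
- have := strong_prod_mindeg_le_min (@gadget_sym d1 k1) (@gadget_sym d2 k2)
             (@gadget_mindeg_le d1 k1) (@gadget_mindeg_le d2 k2).
  by rewrite !maxdeg_gadget.
- by apply/set0Pn; exists ((ord0, ord0), (ord0, ord0)); rewrite !inE.
- exact: clique_cross_dense.
Qed.
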